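(* Let $p\ge1$ and $n\ge p$ be integers. Then $S_{n,a}=S_{n+1,s}$. More precisely: - If $z$ is an odd eigenfunction of order $n$ with eigenvalue $\Lambda$, then $w(x)=\int_{-1}^x z(\xi)\,d\xi$ is an even eigenfunction of order $n+1$ with eigenvalue $\Lambda$. - Conversely, if $w$ is an even eigenfunction of order $n+1$ with eigenvalue $\Lambda$, then $w'$ is an odd eigenfunction of order $n$ with eigenvalue $\Lambda$.
   Context: Fix an integer $p\ge1$. For an integer $k\ge p$ and real $\Lambda$, the differential operator on $[-1,1]$ is $$L^{2k}(\Lambda)=(-1)^k\frac{d^{2k}}{dx^{2k}}-\Lambda(-1)^{k-p}\frac{d^{2k-2p}}{dx^{2k-2p}}.$$ A real number $\Lambda$ is an eigenvalue of order $k$ if there is a real $z\in C^{2k}[-1,1]$, $z\not\equiv0$, such that: - $L^{2k}(\Lambda)z=0$ on $[-1,1]$, and - $z^{(j)}(\pm1)=0$ for $j=0,\dots,k-1$. Such a $z$ is an eigenfunction of order $k$. $S_{k,s}$ (resp. $S_{k,a}$) is the set of eigenvalues of order $k$ admitting an even (resp. odd) eigenfunction of order $k$. *)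

From Stdlib Require Import Reals Lra Lia.
Open Scope R_scope.

Definition Icl (x : R) : Prop := -1 <= x <= 1.

Definition deriv_on (f : R -> R) (x l : R) : Prop :=
  forall eps, 0 < eps -> exists delta, 0 < delta /\
    forall h, h <> 0 -> Rabs h < delta -> Icl (x + h) ->
      Rabs ((f (x + h) - f x) / h - l) < eps.

Definition cont_on (f : R -> R) (x : R) : Prop :=
  forall eps, 0 < eps -> exists delta, 0 < delta /\
    forall y, Icl y -> Rabs (y - x) < delta -> Rabs (f y - f x) < eps.

Definition Cm_derivs (m : nat) (z : R -> R) (d : nat -> R -> R) : Prop :=
  (forall x, Icl x -> d 0%nat x = z x) /\
  (forall j x, (j < m)%nat -> Icl x -> deriv_on (d j) x (d (S j) x)) /\
  (forall x, Icl x -> cont_on (d m) x).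

(* z is an eigenfunction of order k (k >= p) with eigenvalue Lam for
   L^{2k}(Lam) = (-1)^k D^{2k} - Lam (-1)^{k-p} D^{2k-2p}. *)
Definition eigenfunction (p k : nat) (Lam : R) (z : R -> R) : Prop :=
  (p <= k)%nat /\
  exists d : nat -> R -> R,
    Cm_derivs (2 * k) z d /\
    (exists x, Icl x /\ z x <> 0) /\
    (forall x, Icl x ->
       (-1) ^ k * d (2 * k)%nat x
       - Lam * (-1) ^ (k - p) * d (2 * k - 2 * p)%nat x = 0) /\
    (forall j, (j < k)%nat -> d j 1 = 0 /\ d j (-1) = 0).

Definition is_even (z : R -> R) : Prop := forall x, Icl x -> z (- x) = z x.
Definition is_odd (z : R -> R) : Prop := forall x, Icl x -> z (- x) = - z x.

Definition in_S_s (p k : nat) (Lam : R) : Prop :=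
  exists z, eigenfunction p k Lam z /\ is_even z.
Definition in_S_a (p k : nat) (Lam : R) : Prop :=
  exists z, eigenfunction p k Lam z /\ is_odd z.

From Stdlib Require Import Reals Lra Lia Classical.
From Coquelicot Require Import Coquelicot.
Open Scope R_scope.

(* L^{2k}(Lam) has constant coefficients, so it commutes with differentiation. If z solves the
   order-n problem, its primitive w from -1 solves the order-(n+1) equation (the derivative of
   the order-n one, up to sign); w is even because w(x) - w(-x) has derivative z(x) + z(-x) = 0,
   so w(1) = w(-1) = 0 and the remaining boundary conditions are those of z. Conversely, for an
   even w of order n+1 the order-n expression in w' has zero derivative and involves only odd
   derivatives of w, so it is an odd constant, i.e. zero. *)


Lemma Icl_opp x : Icl x -> Icl (- x).
Proof. unfold Icl; intros; lra. Qed.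

Lemma Icl_m1 : Icl (-1).
Proof. unfold Icl; lra. Qed.

Lemma Icl_1 : Icl 1.
Proof. unfold Icl; lra. Qed.

Lemma Icl_0 : Icl 0.
Proof. unfold Icl; lra. Qed.

Lemma pow_m1_sqr n : (-1) ^ n * (-1) ^ n = 1.
Proof. rewrite <- pow_add; replace (n + n)%nat with (2 * n)%nat by lia; apply pow_1_even. Qed.

Lemma deriv_on_ext f g x l : (forall y, Icl y -> f y = g y) -> Icl x ->
  deriv_on f x l -> deriv_on g x l.
Proof.
  intros E Hx D eps He. destruct (D eps He) as [d [Hd H]]. exists d; split; [exact Hd|].
  intros h Hh0 Hh Hi. rewrite <- (E _ Hi), <- (E _ Hx). auto.
Qed.

Lemma cont_on_ext f g x : (forall y, Icl y -> f y = g y) -> Icl x ->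
  cont_on f x -> cont_on g x.
Proof.
  intros E Hx C eps He. destruct (C eps He) as [d [Hd H]]. exists d; split; [exact Hd|].
  intros y Hy Hyx. rewrite <- (E _ Hy), <- (E _ Hx). auto.
Qed.

Lemma Icl_step x delta : Icl x -> 0 < delta ->
  exists h, h <> 0 /\ Rabs h < delta /\ Icl (x + h).
Proof.
  unfold Icl; intros Hx Hd. set (m := Rmin 1 delta / 2).
  assert (0 < m < delta /\ m <= 1 / 2).
  { unfold m. pose proof (Rmin_l 1 delta). pose proof (Rmin_r 1 delta).
    pose proof (Rmin_pos 1 delta Rlt_0_1 Hd). lra. }
  destruct (Rle_dec x 0).
  - exists m. rewrite Rabs_right; lra.
  - exists (- m). rewrite Rabs_Ropp, Rabs_right; lra.
Qed.

Lemma deriv_on_unique f x l1 l2 : Icl x -> deriv_on f x l1 -> deriv_on f x l2 -> l1 = l2.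
Proof.
  intros Hx D1 D2.
  assert (Close : forall e, 0 < e -> Rabs (l1 - l2) < 2 * e).
  { intros e He. destruct (D1 e He) as [d1 [Hd1 H1]], (D2 e He) as [d2 [Hd2 H2]].
    destruct (Icl_step x (Rmin d1 d2) Hx (Rmin_pos _ _ Hd1 Hd2)) as [h [Hh0 [Hh Hi]]].
    pose proof (Rmin_l d1 d2). pose proof (Rmin_r d1 d2).
    specialize (H1 h Hh0 ltac:(lra) Hi). specialize (H2 h Hh0 ltac:(lra) Hi).
    set (q := (f (x + h) - f x) / h) in *.
    replace (l1 - l2) with (- (q - l1) + (q - l2)) by ring.
    pose proof (Rabs_triang (- (q - l1)) (q - l2)). rewrite Rabs_Ropp in H3. lra. }
  destruct (Req_dec (l1 - l2) 0) as [E|Hne]; [lra|].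
  pose proof (Rabs_pos_lt _ Hne). specialize (Close (Rabs (l1 - l2) / 2) ltac:(lra)). lra.
Qed.

Lemma deriv_on_cont_on f x l : deriv_on f x l -> cont_on f x.
Proof.
  intros D eps He. destruct (D 1 Rlt_0_1) as [d [Hd H]].
  assert (Hl : 0 < Rabs l + 1) by (pose proof (Rabs_pos l); lra).
  exists (Rmin d (eps / (Rabs l + 1))).
  split; [apply Rmin_pos; [exact Hd | apply Rdiv_lt_0_compat; lra]|].
  intros y Hy Hyx. destruct (Req_dec y x) as [->|Hne].
  { unfold Rminus; rewrite Rplus_opp_r, Rabs_R0; exact He. }
  pose proof (Rmin_l d (eps / (Rabs l + 1))). pose proof (Rmin_r d (eps / (Rabs l + 1))).
  specialize (H (y - x) ltac:(lra) ltac:(lra) ltac:(now replace (x + (y - x)) with y by ring)).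
  replace (x + (y - x)) with y in H by ring.
  set (q := (f y - f x) / (y - x)) in H.
  assert (Hq : Rabs q < Rabs l + 1).
  { replace q with ((q - l) + l) by ring. pose proof (Rabs_triang (q - l) l). lra. }
  replace (f y - f x) with (q * (y - x)) by (unfold q; field; lra).
  rewrite Rabs_mult.
  assert (eps = (Rabs l + 1) * (eps / (Rabs l + 1))) by (field; lra).
  pose proof (Rabs_pos q). pose proof (Rabs_pos (y - x)). nra.
Qed.

Lemma deriv_on_const c x : deriv_on (fun _ => c) x 0.
Proof.
  intros eps He. exists 1; split; [lra|]. intros h Hh0 _ _.
  replace ((c - c) / h - 0) with 0 by (field; exact Hh0). rewrite Rabs_R0; exact He.
Qed.

Lemma deriv_on_scal c f x l : deriv_on f x l -> deriv_on (fun t => c * f t) x (c * l).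
Proof.
  intros D eps He.
  assert (Hc : 0 < Rabs c + 1) by (pose proof (Rabs_pos c); lra).
  destruct (D (eps / (Rabs c + 1))) as [d [Hd H]]; [apply Rdiv_lt_0_compat; lra|].
  exists d; split; [exact Hd|]. intros h Hh0 Hh Hi. specialize (H h Hh0 Hh Hi).
  replace ((c * f (x + h) - c * f x) / h - c * l) with (c * ((f (x + h) - f x) / h - l))
    by (field; exact Hh0).
  rewrite Rabs_mult.
  assert (eps = (Rabs c + 1) * (eps / (Rabs c + 1))) by (field; lra).
  pose proof (Rabs_pos c). pose proof (Rabs_pos ((f (x + h) - f x) / h - l)). nra.
Qed.

Lemma deriv_on_plus f g x l1 l2 : deriv_on f x l1 -> deriv_on g x l2 ->
  deriv_on (fun t => f t + g t) x (l1 + l2).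
Proof.
  intros D1 D2 eps He.
  destruct (D1 (eps / 2)) as [d1 [Hd1 H1]]; [lra|].
  destruct (D2 (eps / 2)) as [d2 [Hd2 H2]]; [lra|].
  exists (Rmin d1 d2). split; [apply Rmin_pos; assumption|].
  intros h Hh0 Hh Hi. pose proof (Rmin_l d1 d2). pose proof (Rmin_r d1 d2).
  specialize (H1 h Hh0 ltac:(lra) Hi). specialize (H2 h Hh0 ltac:(lra) Hi).
  replace ((f (x + h) + g (x + h) - (f x + g x)) / h - (l1 + l2))
    with (((f (x + h) - f x) / h - l1) + ((g (x + h) - g x) / h - l2)) by (field; exact Hh0).
  eapply Rle_lt_trans; [apply Rabs_triang|]. lra.
Qed.

Lemma deriv_on_comp_opp f x l : deriv_on f (- x) l -> deriv_on (fun t => f (- t)) x (- l).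
Proof.
  intros D eps He. destruct (D eps He) as [d [Hd H]]. exists d; split; [exact Hd|].
  intros h Hh0 Hh Hi. unfold Icl in Hi.
  specialize (H (- h) ltac:(lra) ltac:(now rewrite Rabs_Ropp) ltac:(unfold Icl; lra)).
  replace (- (x + h)) with (- x + - h) by ring.
  replace ((f (- x + - h) - f (- x)) / h - - l) with (- ((f (- x + - h) - f (- x)) / - h - l))
    by (field; exact Hh0).
  now rewrite Rabs_Ropp.
Qed.

(* Clamping onto [-1,1] extends a function continuous on [-1,1] to one continuous on all of R,
   as required by the library's mean value theorem and fundamental theorem of calculus. *)
Definition clamp (x : R) : R := Rmax (-1) (Rmin 1 x).

Lemma clamp_Icl x : Icl (clamp x).
Proof. unfold clamp, Icl, Rmax, Rmin. repeat destruct Rle_dec; lra. Qed.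

Lemma clamp_id x : Icl x -> clamp x = x.
Proof. unfold clamp, Icl, Rmax, Rmin. intros. repeat destruct Rle_dec; lra. Qed.

Lemma clamp_contract x y : Rabs (clamp y - clamp x) <= Rabs (y - x).
Proof. unfold clamp, Rmax, Rmin, Rabs. repeat destruct Rle_dec; repeat destruct Rcase_abs; lra. Qed.

Lemma continuity_pt_clamp f : (forall x, Icl x -> cont_on f x) ->
  forall x, continuity_pt (fun t => f (clamp t)) x.
Proof.
  intros C x eps He. destruct (C (clamp x) (clamp_Icl x) eps He) as [d [Hd H]].
  exists d; split; [exact Hd|]. intros y [_ Hy]. apply H; [apply clamp_Icl|].
  pose proof (clamp_contract x y). simpl in *. unfold R_dist in *. lra.
Qed.

Lemma derivable_pt_lim_deriv_on f x l : derivable_pt_lim f x l -> deriv_on f x l.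
Proof.
  intros D eps He. destruct (D eps He) as [d H]. exists d; split; [apply cond_pos|].
  intros h Hh0 Hh _. exact (H h Hh0 Hh).
Qed.

Lemma deriv_on_derivable_pt_lim f x l : -1 < x < 1 -> deriv_on f x l -> derivable_pt_lim f x l.
Proof.
  intros Hx D eps He. destruct (D eps He) as [d [Hd H]].
  assert (Hp : 0 < Rmin d (Rmin (1 - x) (1 + x))) by (repeat apply Rmin_pos; lra).
  exists (mkposreal _ Hp). simpl. intros h Hh0 Hh.
  pose proof (Rmin_l d (Rmin (1 - x) (1 + x))). pose proof (Rmin_r d (Rmin (1 - x) (1 + x))).
  pose proof (Rmin_l (1 - x) (1 + x)). pose proof (Rmin_r (1 - x) (1 + x)).
  apply H; [exact Hh0 | lra |].
  unfold Icl, Rabs in *. destruct Rcase_abs; lra.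
Qed.

Lemma deriv_on_zero_const f a b : (forall x, Icl x -> deriv_on f x 0) ->
  Icl a -> Icl b -> f a = f b.
Proof.
  intros D Ha Hb.
  set (g := fun t => f (clamp t)).
  assert (Eg : forall t, Icl t -> f t = g t) by (intros; unfold g; rewrite clamp_id; auto).
  rewrite (Eg a Ha), (Eg b Hb).
  destruct (MVT_gen g a b (fun _ => 0)) as [c [_ Hc]]; [| |lra].
  - intros x Hx. apply is_derive_Reals, deriv_on_derivable_pt_lim.
    + unfold Icl in *. revert Hx. apply Rmin_case; apply Rmax_case; lra.
    + apply (deriv_on_ext f); [exact Eg | | apply D];
        unfold Icl in *; revert Hx; apply Rmin_case; apply Rmax_case; lra.
  - intros x _. apply continuity_pt_clamp.
    intros y Hy. exact (deriv_on_cont_on _ _ _ (D y Hy)).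
Qed.

Lemma odd_deriv_on_zero f : is_odd f -> (forall x, Icl x -> deriv_on f x 0) ->
  forall x, Icl x -> f x = 0.
Proof.
  intros Hodd D x Hx.
  assert (f 0 = 0) by (pose proof (Hodd 0 Icl_0) as H0; rewrite Ropp_0 in H0; lra).
  rewrite (deriv_on_zero_const f x 0 D Hx Icl_0). assumption.
Qed.

Lemma cont_on_Riemann_integrable z a b : (forall x, Icl x -> cont_on z x) ->
  Icl a -> Icl b -> Riemann_integrable z a b.
Proof.
  intros C Ha Hb.
  apply (Riemann_integrable_ext (fun t => z (clamp t))).
  { intros x Hx. apply f_equal, clamp_id. unfold Icl in *. revert Hx.
    apply Rmin_case; apply Rmax_case; lra. }
  pose proof (continuity_pt_clamp z C) as Cc.
  destruct (Rle_dec a b).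
  - apply continuity_implies_RiemannInt; auto.
  - apply RiemannInt_P1, continuity_implies_RiemannInt; auto; lra.
Qed.

Lemma deriv_on_RiemannInt z w : (forall x, Icl x -> cont_on z x) ->
  (forall x, Icl x -> exists pr : Riemann_integrable z (-1) x, w x = RiemannInt pr) ->
  forall x, Icl x -> deriv_on w x (z x).
Proof.
  intros C W x Hx.
  set (zc := fun t => z (clamp t)).
  assert (C0 : forall t, -1 <= t <= 1 -> continuity_pt zc t)
    by (intros; apply continuity_pt_clamp; exact C).
  assert (h : -1 <= 1) by lra.
  set (P := primitive h (FTC_P1 h C0)).
  assert (EP : forall y, Icl y -> P y = w y).
  { intros y Hy. destruct (W y Hy) as [pr ->]. unfold P, primitive, Icl in *.
    destruct (Rle_dec (-1) y); [|lra]. destruct (Rle_dec y 1); [|lra].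
    apply RiemannInt_ext. intros t Ht. unfold zc. rewrite clamp_id; [reflexivity|].
    unfold Icl. revert Ht. apply Rmin_case; apply Rmax_case; lra. }
  apply (deriv_on_ext P); [exact EP | exact Hx |].
  replace (z x) with (zc x) by (unfold zc; rewrite clamp_id; auto).
  apply derivable_pt_lim_deriv_on, RiemannInt_P28. exact Hx.
Qed.

Lemma Cm_derivs_cont_on m z d : Cm_derivs m z d -> forall x, Icl x -> cont_on z x.
Proof.
  intros [D0 [DD DC]] x Hx. apply (cont_on_ext (d 0%nat)); [exact D0 | exact Hx |].
  destruct m as [|m]; [exact (DC x Hx)|].
  apply (deriv_on_cont_on _ _ _ (DD 0%nat x (Nat.lt_0_succ m) Hx)).
Qed.

Lemma Cm_derivs_weaken m k z d : (k <= m)%nat -> Cm_derivs m z d -> Cm_derivs k z d.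
Proof.
  intros Hk [D0 [DD DC]]. split; [exact D0|]. split.
  - intros j x Hj Hx. apply DD; [lia | exact Hx].
  - intros x Hx. destruct (Nat.eq_dec k m) as [->|Hne]; [exact (DC x Hx)|].
    apply (deriv_on_cont_on _ _ _ (DD k x ltac:(lia) Hx)).
Qed.

Lemma Cm_derivs_snoc m z d f : Cm_derivs m z d ->
  (forall x, Icl x -> deriv_on (d m) x (f x)) -> (forall x, Icl x -> cont_on f x) ->
  Cm_derivs (S m) z (fun j => if (j <=? m)%nat then d j else f).
Proof.
  intros [D0 [DD _]] Df Cf. split; [exact D0|]. split.
  - intros j x Hj Hx. destruct (Nat.eq_dec j m) as [->|Hne].
    + rewrite Nat.leb_refl, (proj2 (Nat.leb_gt (S m) m) (Nat.lt_succ_diag_r m)). exact (Df x Hx).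
    + rewrite (proj2 (Nat.leb_le j m)), (proj2 (Nat.leb_le (S j) m)) by lia. apply DD; [lia | exact Hx].
  - intros x Hx. rewrite (proj2 (Nat.leb_gt (S m) m) (Nat.lt_succ_diag_r m)). exact (Cf x Hx).
Qed.

Lemma Cm_derivs_antiderivative m z d w : Cm_derivs m z d ->
  (forall x, Icl x -> deriv_on w x (z x)) ->
  Cm_derivs (S m) w (fun j => match j with O => w | S j => d j end).
Proof.
  intros [D0 [DD DC]] W. split; [reflexivity|]. split.
  - intros [|j] x Hj Hx.
    + rewrite D0 by exact Hx. exact (W x Hx).
    + apply DD; [lia | exact Hx].
  - exact DC.
Qed.

Lemma Cm_derivs_derivative m w d v : Cm_derivs (S m) w d ->
  (forall x, Icl x -> deriv_on w x (v x)) -> Cm_derivs m v (fun j => d (S j)).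
Proof.
  intros [D0 [DD DC]] V. split; [|split].
  - intros x Hx. apply (deriv_on_unique w x); [exact Hx | | exact (V x Hx)].
    apply (deriv_on_ext (d 0%nat)); [exact D0 | exact Hx | apply DD; [lia | exact Hx]].
  - intros j x Hj Hx. apply DD; [lia | exact Hx].
  - exact DC.
Qed.

Lemma Cm_derivs_even m w d : Cm_derivs m w d -> is_even w ->
  forall j x, (j <= m)%nat -> Icl x -> d j (- x) = (-1) ^ j * d j x.
Proof.
  intros [D0 [DD _]] Hev. induction j as [|j IH]; intros x Hj Hx.
  - simpl. rewrite !D0 by (auto using Icl_opp). rewrite Hev by exact Hx. ring.
  - assert (Reflected : deriv_on (fun t => d j (- t)) x (- d (S j) (- x)))
      by (apply deriv_on_comp_opp, DD; [lia | apply Icl_opp, Hx]).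
    assert (Scaled : deriv_on (fun t => d j (- t)) x ((-1) ^ j * d (S j) x)).
    { apply (deriv_on_ext (fun t => (-1) ^ j * d j t)); [| exact Hx |].
      - intros y Hy. symmetry. apply IH; [lia | exact Hy].
      - apply deriv_on_scal, DD; [lia | exact Hx]. }
    pose proof (deriv_on_unique _ _ _ _ Hx Reflected Scaled). simpl. lra.
Qed.

Lemma antiderivative_odd_even z w : (forall x, Icl x -> deriv_on w x (z x)) ->
  is_odd z -> is_even w.
Proof.
  intros W Hodd.
  set (g := fun t => w t + -1 * w (- t)).
  assert (Dg : forall x, Icl x -> deriv_on g x 0).
  { intros x Hx.
    replace 0 with (z x + -1 * - z (- x)) by (rewrite (Hodd x Hx); ring).
    apply deriv_on_plus; [exact (W x Hx)|].
    apply deriv_on_scal, deriv_on_comp_opp, W, Icl_opp, Hx. }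
  intros x Hx. pose proof (deriv_on_zero_const g x 0 Dg Hx Icl_0) as E.
  unfold g in E. rewrite Ropp_0 in E. lra.
Qed.

Lemma antiderivative_nontrivial z w : (forall x, Icl x -> deriv_on w x (z x)) ->
  (exists x, Icl x /\ z x <> 0) -> exists x, Icl x /\ w x <> 0.
Proof.
  intros W [x0 [Hx0 Hz0]]. apply NNPP. intro Hw. apply Hz0.
  apply (deriv_on_unique w x0); [exact Hx0 | exact (W x0 Hx0) |].
  apply (deriv_on_ext (fun _ => 0)); [| exact Hx0 | apply deriv_on_const].
  intros y Hy. apply NNPP. intro. apply Hw. exists y. auto.
Qed.

Lemma derivative_nontrivial w v : (forall x, Icl x -> deriv_on w x (v x)) -> w 1 = 0 ->
  (exists x, Icl x /\ w x <> 0) -> exists x, Icl x /\ v x <> 0.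
Proof.
  intros V W1 [x0 [Hx0 Hw0]]. apply NNPP. intro Hv. apply Hw0.
  rewrite <- W1. apply deriv_on_zero_const; [| exact Hx0 | exact Icl_1].
  intros x Hx. replace 0 with (v x); [exact (V x Hx)|].
  apply NNPP. intro. apply Hv. exists x. auto.
Qed.

(* The order-n equation gives d(2n) = c d(2n-2p) with c = (-1)^n Lam (-1)^(n-p); since p >= 1
   this can be differentiated once more, and the derivative is the order-(n+1) equation for w. *)
Lemma eigenfunction_antiderivative p n Lam z w : (1 <= p)%nat ->
  eigenfunction p n Lam z -> is_odd z ->
  (forall x, Icl x -> deriv_on w x (z x)) -> w (-1) = 0 ->
  eigenfunction p (S n) Lam w /\ is_even w.
Proof.
  intros Hp [Hpn [d [Cz [Hz0 [ODE BC]]]]] Hodd W Wm1.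
  pose proof (antiderivative_odd_even z w W Hodd) as Hev.
  pose proof Cz as [_ [DD _]].
  set (c := (-1) ^ n * Lam * (-1) ^ (n - p)).
  set (k := (2 * n - 2 * p)%nat).
  assert (Hd : forall x, Icl x -> d (2 * n)%nat x = c * d k x).
  { intros x Hx. specialize (ODE x Hx). unfold c.
    replace (d (2 * n)%nat x) with ((-1) ^ n * ((-1) ^ n * d (2 * n)%nat x))
      by (rewrite <- Rmult_assoc, pow_m1_sqr; ring).
    fold k in ODE.
    replace ((-1) ^ n * d (2 * n)%nat x) with (Lam * (-1) ^ (n - p) * d k x) by lra. ring. }
  set (f := fun x => c * d (S k) x).
  assert (Cz' : Cm_derivs (S (2 * n)) z (fun j => if (j <=? 2 * n)%nat then d j else f)).
  { apply Cm_derivs_snoc; [exact Cz | |].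
    - intros x Hx. apply (deriv_on_ext (fun t => c * d k t)); [| exact Hx |].
      + intros y Hy. symmetry. exact (Hd y Hy).
      + apply deriv_on_scal, DD; [unfold k; lia | exact Hx].
    - intros x Hx. apply (deriv_on_cont_on _ _ (c * d (S (S k)) x)).
      apply deriv_on_scal, DD; [unfold k; lia | exact Hx]. }
  split; [|exact Hev]. split; [lia|].
  exists (fun j => match j with O => w | S j => if (j <=? 2 * n)%nat then d j else f end).
  replace (2 * S n)%nat with (S (S (2 * n))) by lia.
  split; [exact (Cm_derivs_antiderivative _ _ _ w Cz' W)|].
  split; [exact (antiderivative_nontrivial z w W Hz0)|]. split.
  - intros x Hx.
    replace (S (S (2 * n)) - 2 * p)%nat with (S (S k)) by (unfold k; lia).
    replace (S n - p)%nat with (S (n - p)) by lia.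
    rewrite (proj2 (Nat.leb_gt (S (2 * n)) (2 * n))), (proj2 (Nat.leb_le (S k) (2 * n)))
      by (unfold k; lia).
    unfold f, c. simpl pow.
    transitivity (- Lam * (-1) ^ (n - p) * d (S k) x * ((-1) ^ n * (-1) ^ n - 1)); [ring|].
    rewrite pow_m1_sqr. ring.
  - intros [|j] Hj; [|rewrite (proj2 (Nat.leb_le j (2 * n))) by lia; apply BC; lia].
    split; [|exact Wm1]. rewrite <- (Hev 1 Icl_1). exact Wm1.
Qed.

Lemma eigenfunction_derivative p n Lam w v : (p <= n)%nat ->
  eigenfunction p (S n) Lam w -> is_even w ->
  (forall x, Icl x -> deriv_on w x (v x)) -> eigenfunction p n Lam v /\ is_odd v.
Proof.
  intros Hpn [_ [d [Cw [Hw0 [ODE BC]]]]] Hev V.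
  replace (2 * S n)%nat with (S (S (2 * n))) in Cw, ODE by lia.
  pose proof (Cm_derivs_even _ _ _ Cw Hev) as Par.
  pose proof (Cm_derivs_derivative _ _ _ v Cw V) as Cv.
  pose proof Cw as [_ [DD _]].
  set (k := (2 * n - 2 * p)%nat).
  assert (Hodd : is_odd v).
  { intros x Hx. destruct Cv as [Dv _].
    rewrite <- (Dv x Hx), <- (Dv (- x) (Icl_opp x Hx)), (Par 1%nat x ltac:(lia) Hx). ring. }
  split; [split; [exact Hpn|] | exact Hodd].
  exists (fun j => d (S j)). split; [apply (Cm_derivs_weaken (S (2 * n))); [lia | exact Cv]|].
  assert (W1 : w 1 = 0)
    by (destruct Cw as [D0 _]; rewrite <- D0 by exact Icl_1; exact (proj1 (BC 0%nat ltac:(lia)))).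
  split; [exact (derivative_nontrivial w v V W1 Hw0)|].
  split; [|intros j Hj; apply BC; lia].
  fold k. set (G := fun t => (-1) ^ n * d (S (2 * n)) t + - Lam * (-1) ^ (n - p) * d (S k) t).
  assert (DG : forall x, Icl x -> deriv_on G x 0).
  { intros x Hx. specialize (ODE x Hx).
    replace (S (S (2 * n)) - 2 * p)%nat with (S (S k)) in ODE by (unfold k; lia).
    replace (S n - p)%nat with (S (n - p)) in ODE by lia. simpl pow in ODE.
    replace 0 with ((-1) ^ n * d (S (S (2 * n))) x + - Lam * (-1) ^ (n - p) * d (S (S k)) x)
      by lra.
    apply deriv_on_plus; apply deriv_on_scal, DD; solve [unfold k; lia | exact Hx]. }
  assert (Godd : is_odd G).
  { intros x Hx. unfold G. rewrite !Par by (unfold k; lia || exact Hx).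
    replace (S k) with (S (2 * (n - p))) by (unfold k; lia).
    rewrite !pow_1_odd. ring. }
  intros x Hx. pose proof (odd_deriv_on_zero G Godd DG x Hx) as E. unfold G in E. lra.
Qed.

Theorem mainTheorem6 (p n : nat) (Hp : (1 <= p)%nat) (Hn : (p <= n)%nat) :
  (forall Lam : R, in_S_a p n Lam <-> in_S_s p (S n) Lam) /\
  (forall (Lam : R) (z w : R -> R),
     eigenfunction p n Lam z -> is_odd z ->
     (forall x, Icl x -> exists pr : Riemann_integrable z (-1) x,
                          w x = RiemannInt pr) ->
     eigenfunction p (S n) Lam w /\ is_even w) /\
  (forall (Lam : R) (w v : R -> R),
     eigenfunction p (S n) Lam w -> is_even w ->
     (forall x, Icl x -> deriv_on w x (v x)) ->
     eigenfunction p n Lam v /\ is_odd v).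
Proof.
  assert (Integrate : forall Lam z w, eigenfunction p n Lam z -> is_odd z ->
     (forall x, Icl x -> exists pr : Riemann_integrable z (-1) x, w x = RiemannInt pr) ->
     eigenfunction p (S n) Lam w /\ is_even w).
  { intros Lam z w Ez Hodd W.
    assert (Cz : forall x, Icl x -> cont_on z x)
      by (destruct Ez as [_ [d [Cz _]]]; exact (Cm_derivs_cont_on _ _ _ Cz)).
    apply (eigenfunction_antiderivative p n Lam z w Hp Ez Hodd (deriv_on_RiemannInt z w Cz W)).
    destruct (W (-1) Icl_m1) as [pr ->]. apply RiemannInt_P9. }
  assert (Differentiate := fun Lam w v => eigenfunction_derivative p n Lam w v Hn).
  split; [|split; [exact Integrate | exact Differentiate]].
  intros Lam. split.
  - intros [z [Ez Hodd]]. exists (fun x => RInt z (-1) x). apply (Integrate Lam z _ Ez Hodd).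
    intros x Hx. destruct Ez as [_ [d [Cz _]]].
    exists (cont_on_Riemann_integrable z (-1) x (Cm_derivs_cont_on _ _ _ Cz) Icl_m1 Hx).
    apply RInt_Reals.
  - intros [w [Ew Hev]]. pose proof Ew as [_ [d [[D0 [DD _]] _]]].
    exists (d 1%nat). apply (Differentiate Lam w _ Ew Hev).
    intros x Hx. apply (deriv_on_ext (d 0%nat)); [exact D0 | exact Hx | apply DD; [lia | exact Hx]].
Qed.
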